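(* Let $\varepsilon>0$, $\kappa\ge \frac14$, $\kappa_0=\frac18$, $\kappa^*=\kappa-\kappa_0$. For any two real periodic grid functions $v,w$ on the $N\times N$ grid with equal means ($h^2\sum_{i,j}v_{i,j}=h^2\sum_{i,j}w_{i,j}$), $$E_N(v)-E_N(w)\le \langle L_N v+f_N(w),\,v-w\rangle-\frac{\varepsilon^2}{2}\|\Delta_N(v-w)\|_2^2-\kappa^*\|\nabla_N(v-w)\|_2^2.$$
   Context: Setting: $\Omega=(0,1)^2$, $N=2K+1$, $h=1/N$, grid $x_i=ih$, $y_j=jh$; periodic grid functions have discrete Fourier expansions $f_{i,j}=\sum_{k,\ell=-K}^{K}\hat f_{k,\ell}\exp(2\pi\mathrm{i}(kx_i+\ell y_j))$. Spectral operators: $\mathcal D_{Nx}$, $\mathcal D_{Ny}$ multiply $\hat f_{k,\ell}$ by $2\pi\mathrm{i}k$, $2\pi\mathrm{i}\ell$; $\nabla_N f=(\mathcal D_{Nx}f,\mathcal D_{Ny}f)$, $\nabla_N\cdot(f_1,f_2)=\mathcal D_{Nx}f_1+\mathcal D_{Ny}f_2$, $\Delta_N=\mathcal D_{Nx}^2+\mathcal D_{Ny}^2$. Inner product $\langle f,g\rangle=h^2\sum_{i,j=0}^{N-1}f_{i,j}g_{i,j}$, $\|f\|_2=\langle f,f\rangle^{1/2}$. $L_N=\varepsilon^2\Delta_N^2-\kappa\Delta_N$. Pointwise nonlinearity $f_N(u)=\nabla_N\cdot\Big(\frac{\nabla_N u}{1+|\nabla_N u|^2}\Big)+\kappa\Delta_N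 u$, where the quotient is computed pointwise on the grid. Discrete energy: $E_N(\phi)=h^2\sum_{i,j=0}^{N-1}\big(-\frac12\ln(1+|\nabla_N\phi|^2)_{i,j}\big)+\frac{\varepsilon^2}{2}\|\Delta_N\phi\|_2^2$. *)

From HB Require Import structures.
From mathcomp Require Import all_boot all_order all_algebra.
From mathcomp Require Import all_classical all_reals.
From mathcomp Require Import exp trigo.
From mathcomp Require Import complex.
Set Implicit Arguments. Unset Strict Implicit. Unset Printing Implicit Defensive.
Import Order.TTheory GRing.Theory Num.Theory.
Local Open Scope ring_scope.
Local Open Scope complex_scope.

Section Grid.
Variable R : realType.
Variable K : nat.

(* N = 2K+1 ; grid indices i,j in {0,...,N-1}; frequencies k,l in {-K,...,K}
   are represented by k' : 'I_N via k = k' - K. *)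
Definition NN : nat := (K.*2).+1.
Definition hh : R := (NN%:R)^-1.

Definition gridfun := 'I_NN -> 'I_NN -> R.

Definition xc (i : 'I_NN) : R := i%:R * hh.
Definition freq (k : 'I_NN) : R := k%:R - K%:R.

Definition cexp2pi (t : R) : R[i] := (cos (2 * pi * t)) +i* (sin (2 * pi * t)).

(* discrete Fourier coefficients: f_{ij} = sum_{k,l} fhat_{kl} e(k x_i + l y_j) *)
Definition fhat (f : gridfun) (k l : 'I_NN) : R[i] :=
  ((hh ^+ 2)%:C) * \sum_(i < NN) \sum_(j < NN)
     ((f i j)%:C * cexp2pi (- (freq k * xc i + freq l * xc j))).

(* spectral derivatives; for real f the spectral sum is real, so we take its
   real part to stay in real grid functions *)
Definition DNx (f : gridfun) : gridfun := fun i j =>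
  complex.Re (\sum_(k < NN) \sum_(l < NN)
        ((0 +i* (2 * pi * freq k)) * fhat f k l * cexp2pi (freq k * xc i + freq l * xc j))).
Definition DNy (f : gridfun) : gridfun := fun i j =>
  complex.Re (\sum_(k < NN) \sum_(l < NN)
        ((0 +i* (2 * pi * freq l)) * fhat f k l * cexp2pi (freq k * xc i + freq l * xc j))).

Definition LapN (f : gridfun) : gridfun := fun i j => DNx (DNx f) i j + DNy (DNy f) i j.

Definition ip (f g : gridfun) : R := hh ^+ 2 * \sum_(i < NN) \sum_(j < NN) f i j * g i j.
Definition nrm2sq (f : gridfun) : R := ip f f.
Definition gradnrm2sq (f : gridfun) : R := nrm2sq (DNx f) + nrm2sq (DNy f).

Definition gsub (f g : gridfun) : gridfun := fun i j => f i j - g i j.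
Definition gadd (f g : gridfun) : gridfun := fun i j => f i j + g i j.

Definition LN (eps kappa : R) (f : gridfun) : gridfun := fun i j =>
  eps ^+ 2 * LapN (LapN f) i j - kappa * LapN f i j.

Definition gradsq (u : gridfun) : gridfun := fun i j => DNx u i j ^+ 2 + DNy u i j ^+ 2.

Definition fN (kappa : R) (u : gridfun) : gridfun := fun i j =>
  DNx (fun a b => DNx u a b / (1 + gradsq u a b)) i j
  + DNy (fun a b => DNy u a b / (1 + gradsq u a b)) i j
  + kappa * LapN u i j.

Definition EN (eps : R) (phi : gridfun) : R :=
  hh ^+ 2 * (\sum_(i < NN) \sum_(j < NN) (- (1/2) * ln (1 + gradsq phi i j)))
  + eps ^+ 2 / 2 * nrm2sq (LapN phi).

Definition gmean (f : gridfun) : R := hh ^+ 2 * \sum_(i < NN) \sum_(j < NN) f i j.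

End Grid.

(* psi(p) = -1/2 ln (1 + |p|^2) satisfies psi(p) <= psi(q) + grad psi(q) . (p - q) + |p - q|^2 / 8:
   with s = 1 + |q|^2, B = q . (p - q) and C = |p - q|^2, the function
   t |-> ln (s + 2 B t + C t^2) - 2 B t / s + C t^2 / 4 has derivative t times a nonnegative
   quantity, because B^2 <= (s - 1) C by Cauchy-Schwarz; so it is nondecreasing on [0, 1].
   The spectral derivatives have purely imaginary symbols, hence are skew-adjoint for <.,.>, and
   summation by parts shows that the right-hand side minus the left-hand side is the grid sum of
   psi(grad w) + grad psi(grad w) . grad (v - w) + |grad (v - w)|^2 / 8 - psi(grad v). *)

From HB Require Import structures.
From mathcomp Require Import all_boot all_order all_algebra.
From mathcomp Require Import all_classical all_reals.
From mathcomp Require Import exp trigo complex.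
From mathcomp Require Import normedtype derive realfun.
From mathcomp Require Import ring lra.
Import Order.TTheory GRing.Theory Num.Theory.
Import numFieldNormedType.Exports.
Local Open Scope ring_scope.

Lemma exchange_big2 (V : nmodType) (I J : finType) (F : I -> I -> J -> J -> V) :
  \sum_i \sum_j \sum_k \sum_l F i j k l = \sum_k \sum_l \sum_i \sum_j F i j k l.
Proof.
under eq_bigr => i _ do rewrite exchange_big.
under eq_bigr => i _ do under eq_bigr => k _ do rewrite exchange_big.
by rewrite exchange_big; apply: eq_bigr => k _; rewrite exchange_big.
Qed.

Lemma exchange_big_pairing (T : comPzRingType) (I J : finType) (c : T)
    (A : J -> J -> T) (E : J -> J -> I -> I -> T) (g : I -> I -> T) :
  c * \sum_i \sum_j (\sum_k \sum_l A k l * E k l i j) * g i j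
  = \sum_k \sum_l A k l * (c * \sum_i \sum_j g i j * E k l i j).
Proof.
transitivity (\sum_i \sum_j \sum_k \sum_l c * (A k l * E k l i j * g i j)).
  rewrite mulr_sumr; apply: eq_bigr => i _; rewrite mulr_sumr; apply: eq_bigr => j _.
  rewrite mulr_suml mulr_sumr; apply: eq_bigr => k _.
  by rewrite mulr_suml mulr_sumr.
rewrite exchange_big2; apply: eq_bigr => k _; apply: eq_bigr => l _.
rewrite !mulr_sumr; apply: eq_bigr => i _; rewrite !mulr_sumr; apply: eq_bigr => j _.
by ring.
Qed.

Section LnBound.
Variable R : realType.

Lemma quadratic_gt0 (s B C t : R) : 0 < s -> 0 <= C -> B ^+ 2 <= (s - 1) * C ->
  0 < s + 2 * B * t + C * t ^+ 2.
Proof.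
move=> s_gt0 C_ge0 BC; have [C0|C_gt0] := eqVneq C 0.
  have B0 : B = 0.
    by apply/eqP; rewrite -sqrf_eq0 eq_le sqr_ge0 andbT; move: BC; rewrite C0 mulr0.
  by rewrite C0 B0; lra.
by have := sqr_ge0 (C * t + B); nra.
Qed.

Lemma log_quadratic_slope_ge0 (s B C t : R) :
  0 < s -> 0 <= C -> B ^+ 2 <= (s - 1) * C -> 0 <= t ->
  0 <= (s + 2 * B * t + C * t ^+ 2)^-1 * (2 * B + 2 * C * t) + (- (2 * B / s) + C / 2 * t).
Proof.
move=> s_gt0 C_ge0 BC t_ge0; have P_gt0 := @quadratic_gt0 s B C t s_gt0 C_ge0 BC.
have -> : (s + 2 * B * t + C * t ^+ 2)^-1 * (2 * B + 2 * C * t) + (- (2 * B / s) + C / 2 * t)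
    = t / (2 * s * (s + 2 * B * t + C * t ^+ 2)) *
      (C * ((s - 2 + B * t) ^+ 2 + 4 + (s * C - B ^+ 2) * t ^+ 2)
       + 8 * ((s - 1) * C - B ^+ 2)).
  by field; rewrite (gt_eqF s_gt0) (gt_eqF P_gt0).
apply: mulr_ge0; first by rewrite divr_ge0 // ltW // !mulr_gt0.
apply: addr_ge0; last by rewrite mulr_ge0 // subr_ge0.
have D_ge0 : 0 <= (s * C - B ^+ 2) * t ^+ 2 by rewrite mulr_ge0 ?sqr_ge0 //; nra.
by rewrite mulr_ge0 // !addr_ge0 ?sqr_ge0.
Qed.

Lemma ln_quadratic_lower_bound (s B C : R) :
  0 < s -> 0 <= C -> B ^+ 2 <= (s - 1) * C ->
  ln s + 2 * B / s - C / 4 <= ln (s + 2 * B + C).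
Proof.
move=> s_gt0 C_ge0 BC.
pose P : {poly R} := s%:P + (2 * B) *: 'X + C *: 'X^2.
pose Q : {poly R} := (- (2 * B / s)) *: 'X + (C / 4) *: 'X^2.
have PE t : P.[t] = s + 2 * B * t + C * t ^+ 2 by rewrite !hornerE.
have QE t : Q.[t] = (C / 4 * t - 2 * B / s) * t.
  by rewrite /Q hornerD !hornerZ hornerX hornerXn; ring.
have P_gt0 t : 0 < P.[t] by rewrite PE quadratic_gt0.
pose phi : R -> R := (@ln R \o horner P) + horner Q.
have phi_derive (t : R) :
    is_derive t 1 phi (P.[t]^-1 * (deriv P).[t] + (deriv Q).[t]).
  exact: is_deriveD (is_derive1_comp (is_derive1_ln (P_gt0 t)) _) _.
have P'E t : (deriv P).[t] = 2 * B + 2 * C * t.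
  by rewrite /P !poly.derivE !hornerE /=; ring.
have Q'E t : (deriv Q).[t] = - (2 * B / s) + C / 2 * t.
  by rewrite /Q !poly.derivE !hornerE /=; congr (_ + _); field.
have phi_derivable x : derivable phi x 1 by case: (phi_derive x).
have phi_mono : phi 0 <= phi 1.
  apply: (ger0_derive1_ndecr (a := 0) (b := 1)) => //.
  - move=> x /[!in_itv] /= /andP[x_gt0 _].
    rewrite derive1E (@derive_val _ _ _ _ _ _ _ (phi_derive x)) P'E Q'E PE.
    by rewrite log_quadratic_slope_ge0 // ltW.
  - exact: derivable_within_continuous.
have phiE t : phi t = ln P.[t] + (C / 4 * t - 2 * B / s) * t.
  have -> : phi t = ln P.[t] + Q.[t] by [].
  by rewrite QE.
move: phi_mono; rewrite !phiE !PE expr0n expr1n /= !(mulr0, mulr1, addr0); lra.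
Qed.

Lemma neg_half_ln1p_descent (a b c d : R) :
  - (1/2) * ln (1 + (a ^+ 2 + b ^+ 2)) <=
    - (1/2) * ln (1 + (c ^+ 2 + d ^+ 2))
    - (c / (1 + (c ^+ 2 + d ^+ 2)) * (a - c) + d / (1 + (c ^+ 2 + d ^+ 2)) * (b - d))
    + 1/8 * ((a - c) ^+ 2 + (b - d) ^+ 2).
Proof.
set s := 1 + (c ^+ 2 + d ^+ 2).
have s_gt0 : 0 < s by rewrite /s ltr_pwDl // addr_ge0 // sqr_ge0.
have := @ln_quadratic_lower_bound s (c * (a - c) + d * (b - d))
                                    ((a - c) ^+ 2 + (b - d) ^+ 2).
have -> : s + 2 * (c * (a - c) + d * (b - d)) + ((a - c) ^+ 2 + (b - d) ^+ 2)
          = 1 + (a ^+ 2 + b ^+ 2) by rewrite /s; ring.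
have -> : c / s * (a - c) + d / s * (b - d) = (c * (a - c) + d * (b - d)) / s.
  by rewrite mulrAC [d / s * _]mulrAC -mulrDl.
have cauchy_schwarz :
    (c * (a - c) + d * (b - d)) ^+ 2 <= (s - 1) * ((a - c) ^+ 2 + (b - d) ^+ 2).
  rewrite -subr_ge0 (_ : _ - _ = (c * (b - d) - d * (a - c)) ^+ 2) ?sqr_ge0 //.
  by rewrite /s; ring.
move=> /(_ s_gt0 (addr_ge0 (sqr_ge0 _) (sqr_ge0 _)) cauchy_schwarz); lra.
Qed.

End LnBound.

Section GridSums.
Variables (R : realType) (K : nat).
Local Notation gridfun := (gridfun R K).
Implicit Types f g F G : gridfun.

Lemma gmeanD f g : gmean (fun i j => f i j + g i j) = gmean f + gmean g.
Proof.
rewrite /gmean -mulrDr -big_split; congr (_ * _).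
by apply: eq_bigr => i _; rewrite -big_split.
Qed.

Lemma gmeanN f : gmean (fun i j => - f i j) = - gmean f.
Proof.
rewrite /gmean -mulrN -sumrN; congr (_ * _).
by apply: eq_bigr => i _; rewrite -sumrN.
Qed.

Lemma gmeanZ (a : R) f : gmean (fun i j => a * f i j) = a * gmean f.
Proof.
rewrite /gmean mulrCA; congr (_ * _); rewrite mulr_sumr.
by apply: eq_bigr => i _; rewrite mulr_sumr.
Qed.

Lemma ler_gmean f g : (forall i j, f i j <= g i j) -> gmean f <= gmean g.
Proof.
move=> le_fg; rewrite ler_wpM2l ?exprn_ge0 ?invr_ge0 //.
by apply: ler_sum => i _; apply: ler_sum => j _.
Qed.

Lemma ipE f g : ip f g = gmean (fun i j => f i j * g i j).
Proof. by []. Qed.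

Lemma ipC f g : ip f g = ip g f.
Proof. by congr (_ * _); apply: eq_bigr => i _; apply: eq_bigr => j _; rewrite mulrC. Qed.

Lemma ip_gaddl F G g : ip (gadd F G) g = ip F g + ip G g.
Proof.
rewrite !ipE -gmeanD; congr gmean.
by apply/funext => i; apply/funext => j; rewrite mulrDl.
Qed.

Lemma ipZl (a : R) F g : ip (fun i j => a * F i j) g = a * ip F g.
Proof.
rewrite !ipE -gmeanZ; congr gmean.
by apply/funext => i; apply/funext => j; rewrite mulrA.
Qed.

End GridSums.

Section Fourier.
Local Open Scope complex_scope.
Variables (R : realType) (K : nat).
Local Notation NN := (NN K).
Local Notation gridfun := (gridfun R K).

Lemma Re_mul_real (z : R[i]) (r : R) : complex.Re (z * r%:C) = complex.Re z * r.
Proof. by case: z => a b /=; ring. Qed.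

Lemma Re_real_mul (r : R) (z : R[i]) : complex.Re (r%:C * z) = r * complex.Re z.
Proof. by case: z => a b /=; ring. Qed.

Lemma conj_cexp2piN (t : R) : (cexp2pi (- t))^* = cexp2pi t.
Proof. by rewrite /cexp2pi /= mulrN cosN sinN opprK. Qed.

Definition fourier_mode (k l i j : 'I_NN) : R[i] :=
  cexp2pi (freq R k * xc R i + freq R l * xc R j).

Definition fourier_multiplier (m : 'I_NN -> 'I_NN -> R[i]) (f : gridfun) : gridfun :=
  fun i j =>
    complex.Re (\sum_(k < NN) \sum_(l < NN) m k l * fhat f k l * fourier_mode k l i j).

Lemma conj_fhat (g : gridfun) k l :
  (fhat g k l)^* =
  (hh R K ^+ 2)%:C * \sum_(i < NN) \sum_(j < NN) (g i j)%:C * fourier_mode k l i j.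
Proof.
rewrite /fhat rmorphM rmorph_sum; congr (_ * _); first exact: conjc_real.
apply: eq_bigr => i _; rewrite rmorph_sum; apply: eq_bigr => j _.
by rewrite rmorphM; congr (_ * _); [exact: conjc_real | exact: conj_cexp2piN].
Qed.

Lemma ip_fourier_multiplier m (f g : gridfun) :
  ip (fourier_multiplier m f) g =
  complex.Re (\sum_(k < NN) \sum_(l < NN) m k l * fhat f k l * (fhat g k l)^*).
Proof.
rewrite /ip /fourier_multiplier.
under eq_bigr => i _ do under eq_bigr => j _ do rewrite -Re_mul_real.
under eq_bigr => i _ do rewrite -raddf_sum.
rewrite -raddf_sum -Re_real_mul exchange_big_pairing.
congr (complex.Re _); apply: eq_bigr => k _; apply: eq_bigr => l _.
by congr (_ * _); symmetry; exact: conj_fhat.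
Qed.

Lemma Re_mul_conj_skew (c a b : R[i]) : complex.Re c = 0 ->
  complex.Re (c * a * b^*) = - complex.Re (c * b * a^*).
Proof. by case: c => [c1 c2]; case: a => [a1 a2]; case: b => [b1 b2] /= ->; ring. Qed.

Lemma fourier_multiplier_skew m (f g : gridfun) :
  (forall k l, complex.Re (m k l) = 0) ->
  ip (fourier_multiplier m f) g = - ip f (fourier_multiplier m g).
Proof.
move=> m_imaginary; rewrite [ip f _]ipC !ip_fourier_multiplier !raddf_sum.
apply: eq_bigr => k _; rewrite !raddf_sum; apply: eq_bigr => l _.
exact: Re_mul_conj_skew.
Qed.

Lemma fhatB (f g : gridfun) k l : fhat (gsub f g) k l = fhat f k l - fhat g k l.
Proof.
rewrite /fhat -mulrBr -sumrB; congr (_ * _); apply: eq_bigr => i _.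
by rewrite -sumrB; apply: eq_bigr => j _; rewrite /gsub rmorphB mulrBl.
Qed.

Lemma fourier_multiplierB m (f g : gridfun) :
  fourier_multiplier m (gsub f g) = gsub (fourier_multiplier m f) (fourier_multiplier m g).
Proof.
apply/funext => i; apply/funext => j.
rewrite /fourier_multiplier /gsub -raddfB -sumrB.
congr (complex.Re _); apply: eq_bigr => k _; rewrite -sumrB; apply: eq_bigr => l _.
by rewrite fhatB mulrBr mulrBl.
Qed.

Lemma DNxE (f : gridfun) :
  DNx f = fourier_multiplier (fun k _ => 0 +i* (2 * pi * freq R k)) f.
Proof. by []. Qed.

Lemma DNyE (f : gridfun) :
  DNy f = fourier_multiplier (fun _ l => 0 +i* (2 * pi * freq R l)) f.
Proof. by []. Qed.

Lemma ip_DNx (f g : gridfun) : ip (DNx f) g = - ip f (DNx g).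
Proof. by rewrite !DNxE; apply: fourier_multiplier_skew. Qed.

Lemma ip_DNy (f g : gridfun) : ip (DNy f) g = - ip f (DNy g).
Proof. by rewrite !DNyE; apply: fourier_multiplier_skew. Qed.

Lemma DNxB (f g : gridfun) : DNx (gsub f g) = gsub (DNx f) (DNx g).
Proof. by rewrite !DNxE fourier_multiplierB. Qed.

Lemma DNyB (f g : gridfun) : DNy (gsub f g) = gsub (DNy f) (DNy g).
Proof. by rewrite !DNyE fourier_multiplierB. Qed.

End Fourier.

Section SpectralOperators.
Variables (R : realType) (K : nat).
Local Notation gridfun := (gridfun R K).
Implicit Types f g F G : gridfun.

Definition ip_grad f g := ip (DNx f) (DNx g) + ip (DNy f) (DNy g).

Lemma ip_LapN f g : ip (LapN f) g = - ip_grad f g.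
Proof.
have -> : LapN f = gadd (DNx (DNx f)) (DNy (DNy f)) by [].
by rewrite ip_gaddl ip_DNx ip_DNy opprD.
Qed.

Lemma ip_LapNC f g : ip (LapN f) g = ip f (LapN g).
Proof.
by rewrite ip_LapN [RHS]ipC ip_LapN /ip_grad [ip (DNx g) _]ipC [ip (DNy g) _]ipC.
Qed.

Lemma LapNB f g : LapN (gsub f g) = gsub (LapN f) (LapN g).
Proof.
apply/funext => i; apply/funext => j.
by rewrite /LapN !DNxB !DNyB /gsub; ring.
Qed.

Lemma EN_gmean (eps : R) f :
  EN eps f = gmean (fun i j => - (1/2) * ln (1 + gradsq f i j))
              + eps ^+ 2 / 2 * ip (LapN f) (LapN f).
Proof. by []. Qed.

Lemma ip_LN (eps kappa : R) f g :
  ip (LN eps kappa f) g = eps ^+ 2 * ip (LapN f) (LapN g) + kappa * ip_grad f g.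
Proof.
have -> : ip (LN eps kappa f) g = eps ^+ 2 * ip (LapN (LapN f)) g - kappa * ip (LapN f) g.
  rewrite !ipE -!(gmeanZ, gmeanN, gmeanD); congr gmean.
  by apply/funext => i; apply/funext => j; rewrite /LN; ring.
by rewrite ip_LapNC (ip_LapN f g) mulrN opprK.
Qed.

Lemma ip_fN (kappa : R) f g :
  ip (fN kappa f) g =
    - (ip (fun i j => DNx f i j / (1 + gradsq f i j)) (DNx g)
       + ip (fun i j => DNy f i j / (1 + gradsq f i j)) (DNy g))
    - kappa * ip_grad f g.
Proof.
have -> : fN kappa f = gadd (gadd (DNx (fun i j => DNx f i j / (1 + gradsq f i j)))
                                  (DNy (fun i j => DNy f i j / (1 + gradsq f i j))))
                            (fun i j => kappa * LapN f i j) by [].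
by rewrite !ip_gaddl ip_DNx ip_DNy ipZl ip_LapN; ring.
Qed.

End SpectralOperators.

Theorem lemma2p6 (R : realType) (K : nat) (eps kappa : R)
  (heps : 0 < eps) (hkappa : 1 / 4 <= kappa)
  (v w : gridfun R K) (hmean : gmean v = gmean w) :
  EN eps v - EN eps w <=
    ip (gadd (LN eps kappa v) (fN kappa w)) (gsub v w)
    - eps ^+ 2 / 2 * nrm2sq (LapN (gsub v w))
    - (kappa - 1 / 8) * gradnrm2sq (gsub v w).
Proof.
rewrite ip_gaddl ip_LN ip_fN !EN_gmean /nrm2sq /gradnrm2sq /ip_grad.
rewrite !ipE -!(gmeanZ, gmeanN, gmeanD); apply: ler_gmean => i j /=.
rewrite LapNB !DNxB !DNyB /gsub /gradsq.
have := @neg_half_ln1p_descent R (DNx v i j) (DNy v i j) (DNx w i j) (DNy w i j).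
lra.
Qed.
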